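(* Let $q=2^t$. Let $p$ be a point of $\ell_0$ and let $\ell,\ell'$ be two distinct lines of $L$, both different from $\ell_0$, each passing through $p$. Then $\chi_\ell+\chi_{\ell'}\in C(P,L_1)$.
   Context: Let $q$ be a prime power and $V$ a $4$-dimensional vector space over $\mathbb{F}_q$ with a nonsingular alternating bilinear form $(\cdot,\cdot)$ and symplectic basis $e_0,e_1,e_2,e_3$ with $(e_0,e_3)=(e_1,e_2)=1$. $P$ is the set of $1$-dimensional subspaces of $V$ (points), $L$ the set of totally isotropic $2$-dimensional subspaces (lines), with incidence by containment. $\ell_0=\langle e_0,e_1\rangle$, and $L_1$ is the set of lines sharing no point with $\ell_0$. $\mathbb{F}_2[P]$ is the $\mathbb{F}_2$-vector space of functions $P\to\mathbb{F}_2$; for a line $\ell$, $\chi_\ell\in\mathbb{F}_2[P]$ is its characteristic function (value $1$ exactly at the $q+1$ points of $\ell$). For a set $S$ of lines, $C(P,S)$ is the $\mathbb{F}_2$-span of $\{\chi_\ell:\ell\in S\}$ in $\mathbb{F}_2[P]$. *)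

From HB Require Import structures.
From mathcomp Require Import all_boot all_order all_algebra.
Set Implicit Arguments. Unset Strict Implicit. Unset Printing Implicit Defensive.
Import GRing.Theory.
Local Open Scope ring_scope.

Section W2.
Variable F : finFieldType.

(* V = F^4 as row vectors; subspaces are represented by their canonical
   square matrix <<U>>%MS (so equal subspaces are equal objects). *)
Definition vec := 'rV[F]_4.
Definition e (i : nat) : vec := delta_mx 0 (inord i).

Definition sform (u v : vec) : F :=
  u 0 (inord 0) * v 0 (inord 3) - u 0 (inord 3) * v 0 (inord 0)
  + u 0 (inord 1) * v 0 (inord 2) - u 0 (inord 2) * v 0 (inord 1).

Definition is_point (U : 'M[F]_4) : bool := (<<U>>%MS == U) && (\rank U == 1)%N.
Definition point := {U : 'M[F]_4 | is_point U}.

Definition is_line (U : 'M[F]_4) : bool :=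
  [&& <<U>>%MS == U, \rank U == 2%N &
      [forall u : vec, forall v : vec,
          ((u <= U)%MS && (v <= U)%MS) ==> (sform u v == 0)]].

Definition lines : {set 'M[F]_4} := [set U | is_line U].

Definition incid (p : point) (l : 'M[F]_4) : bool := (val p <= l)%MS.

Definition ell0 : 'M[F]_4 := <<col_mx (e 0) (e 1)>>%MS.

Definition L1 : {set 'M[F]_4} :=
  [set l in lines | [forall p : point, ~~ (incid p l && incid p ell0)]].

Local Notation F2P := {ffun point -> 'F_2}.

Definition chi (l : 'M[F]_4) : F2P := [ffun p => (incid p l)%:R].

Definition inC (S : {set 'M[F]_4}) (f : F2P) : Prop :=
  exists c : 'M[F]_4 -> 'F_2, f = \sum_(l in S) [ffun x => c l * chi l x].

End W2.
Notation F2P F := {ffun point F -> 'F_2}.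

From HB Require Import structures.
From mathcomp Require Import all_boot all_order all_algebra finfield.
From mathcomp Require Import ring.
Set Implicit Arguments.
Unset Strict Implicit.
Unset Printing Implicit Defensive.
Import GRing.Theory.
Local Open Scope ring_scope.

(* Write p = <pv> with pv = (d0, d1, 0, 0) and fix g with g0 d0 + g1 d1 = 1.
   For u in F^4 let rho u = u2 g0 + u3 g1, kappa u = u2 d1 + u3 d0 (which is
   (u, pv) in characteristic 2) and wt u = u0 d1 + u1 d0.  The lines through p
   other than ell0 are the sets l_th = { u | kappa u = 0, wt u = th rho u }
   (line_char), and the lines mkL a b c spanned by (a, b, 1, 0), (c, a, 0, 1)
   all belong to L1 (mkL_L1).  With eta = th' - th <> 0 and the lines
     fam t s = mkL (t g0 g1 + s + s^2 d0 d1 / eta) (t g0^2 + s^2 d1^2 / eta)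
                   (t g1^2 + s^2 d0^2 / eta)
   we prove chi l_th + chi l_th' = sum_s chi (fam th s) + sum_s chi (fam th' s)
   pointwise, modulo 2: a point of p^perp outside ell0 lies on one line
   fam t _ iff it lies on l_t, and otherwise on none (fam_count_perp); points
   of ell0 lie on no line fam t s (fam_count_ell0); and off p^perp the
   translation s |-> s + eta rho / kappa matches the lines fam th' _ through
   the point with the lines fam th _ (fam_count_shift), by a
   characteristic-2 identity (shift_identity). *)

Lemma addxx_F2 (x : 'F_2) : x + x = 0.
Proof. by rewrite -mulr2n -mulr_natl (pcharf0 (pchar_Fp (isT : prime 2))) mul0r. Qed.

Section Char2Arithmetic.
Variable K : fieldType.
Hypothesis char2 : forall x : K, x *+ 2 = 0.

Lemma oppr_char2 (x : K) : - x = x.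
Proof. by apply/eqP; rewrite eq_sym -subr_eq0 opprK -mulr2n char2. Qed.

Lemma addr_eq0_char2 (x y : K) : (x + y == 0) = (x == y).
Proof. by rewrite -{1}(oppr_char2 y) subr_eq0. Qed.

(* The characteristic-2 identity behind the translation argument: shifting
   t by eta and s by delta = eta * rho / k leaves the expression
   t g rho + s x + s^2 d k / eta unchanged when g k + x + rho d = 0. *)
Lemma shift_identity (t s g x d rho k eta : K) : k != 0 -> eta != 0 ->
  g * k + x + rho * d = 0 ->
  (t + eta) * g * rho + (s + eta * rho / k) * x + (s + eta * rho / k) ^+ 2 / eta * d * k
  = t * g * rho + s * x + s ^+ 2 / eta * d * k.
Proof.
move=> k_neq0 eta_neq0 E.
transitivity (t * g * rho + s * x + s ^+ 2 / eta * d * k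
              + eta * rho / k * (g * k + x + rho * d) + (s * rho * d) *+ 2).
  by field; rewrite k_neq0 eta_neq0.
by rewrite E char2 mulr0 !addr0.
Qed.

End Char2Arithmetic.

Section DualPair.
Variables (K : fieldType) (d0 d1 g0 g1 : K).
Hypothesis gd : g0 * d0 + g1 * d1 = 1.

Lemma parallel_coords (x0 x1 : K) : x0 * d1 = x1 * d0 ->
  x0 = (x0 * g0 + x1 * g1) * d0 /\ x1 = (x0 * g0 + x1 * g1) * d1.
Proof.
(* ring uses hypotheses as rewrite rules from a monomial, hence gd'. *)
have gd' : g0 * d0 = 1 - g1 * d1 by rewrite -gd addrK.
by move=> x01; split; ring: gd' x01.
Qed.

Lemma parallelE (x0 x1 r : K) : ((x0 == r * d0) && (x1 == r * d1)) =
  (x0 * d1 == x1 * d0) && (r == x0 * g0 + x1 * g1).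
Proof.
have gd' : g0 * d0 = 1 - g1 * d1 by rewrite -gd addrK.
apply/andP/andP => [[/eqP -> /eqP ->]|[/eqP x01 /eqP ->]].
  by split; apply/eqP; ring: gd'.
by case: (parallel_coords x01) => <- <-.
Qed.

End DualPair.

Section SymplecticGeometry.
Variable F : finFieldType.

Definition co (u : 'rV[F]_4) (i : nat) : F := u 0 (inord i).

Lemma row4P (u v : 'rV[F]_4) : co u 0 = co v 0 -> co u 1 = co v 1 ->
  co u 2 = co v 2 -> co u 3 = co v 3 -> u = v.
Proof.
move=> h0 h1 h2 h3; apply/rowP => j; rewrite -[j]inord_val.
by case: j => [] [|[|[|[|n]]]] Hj.
Qed.

Lemma co_lin (a b : F) (u v : 'rV[F]_4) (i : nat) :
  co (a *: u + b *: v) i = a * co u i + b * co v i.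
Proof. by rewrite /co !mxE. Qed.

Lemma sub_ell0P (u : 'rV[F]_4) :
  (u <= ell0 F)%MS = (co u 2 == 0) && (co u 3 == 0).
Proof.
have inord4 i j : (i < 4)%N -> (j < 4)%N -> (inord i == inord j :> 'I_4) = (i == j).
  by move=> hi hj; rewrite -val_eqE /= !inordK.
rewrite /ell0 genmxE -addsmxE; apply/sub_addsmxP/andP => [[[x y] ->]|[/eqP u2 /eqP u3]].
  by rewrite /co !mxE !big_ord1 !mxE /e !inord4 //= !mulr0 addr0.
exists ((co u 0)%:M, (co u 1)%:M); apply: row4P;
  by rewrite /co !mxE !big_ord1 !mxE /e !inord4 //= ?mulr0 ?mulr1 ?addr0 ?add0r.
Qed.

Lemma point_spanned (x : point F) : exists2 u : 'rV[F]_4, u != 0 & (val x :=: u)%MS.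
Proof.
case: x => X /andP [_ /eqP rk1] /=.
case: (pickP (fun i => row i X != 0)) => [i Hi|H].
  exists (row i X) => //; apply/eqmxP; rewrite row_sub andbT.
  by rewrite -(mxrank_leqif_sup (row_sub i X)).2 rank_rV Hi rk1.
have X0 : X = 0 by apply/row_matrixP => i; move/negbFE: (H i) => /eqP ->; rewrite linear0.
by move: rk1; rewrite X0 mxrank0.
Qed.

Lemma line_iso (l : 'M[F]_4) (u v : 'rV[F]_4) :
  is_line l -> (u <= l)%MS -> (v <= l)%MS -> sform u v = 0.
Proof.
case/and3P => _ _ /forallP H Hu Hv.
by move: (H u) => /forallP /(_ v) /implyP; rewrite Hu Hv => /(_ isT) /eqP.
Qed.

(* A line is determined by the vectors it contains, since it is stored in
   canonical form. *)
Lemma line_eq (l l' : 'M[F]_4) : is_line l -> is_line l' ->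
  (forall u : 'rV[F]_4, (u <= l)%MS = (u <= l')%MS) -> l = l'.
Proof.
case/and3P => /eqP gl _ _ /and3P [/eqP gl' _ _] E.
have /genmxP : (l == l')%MS by apply/andP; split; apply/rV_subP => u; rewrite E.
by rewrite gl gl'.
Qed.

Lemma line_off_ell0 (l : 'M[F]_4) : is_line l -> l != ell0 F ->
  exists2 z : 'rV[F]_4, (z <= l)%MS & (z <= ell0 F)%MS = false.
Proof.
move=> Hl Hl0; case: (pickP (fun z : 'rV[F]_4 => (z <= l)%MS && ~~ (z <= ell0 F)%MS)).
  by move=> z /andP [Hz /negbTE Hz0]; exists z.
move=> H; case/negP: Hl0; case/and3P: Hl => /eqP gl /eqP rl _.
have sub : (l <= ell0 F)%MS.
  by apply/rV_subP => z Hz; move: (H z); rewrite Hz => /negbFE.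
have /genmxP : (l == ell0 F)%MS.
  rewrite -(mxrank_leqif_eq sub).2 rl eqn_leq -{1}rl mxrankS //=.
  by rewrite /ell0 genmxE rank_leq_row.
by rewrite gl /ell0 genmx_id => ->.
Qed.

(* The rows (a, b, 1, 0) and (c, a, 0, 1) span the typical line meeting
   ell0 trivially. *)
Definition mkB (a b c : F) : 'M[F]_(2,4) :=
  \matrix_(i < 2, j < 4)
    (if i == 0 :> nat then nth 0 [:: a; b; 1; 0] j else nth 0 [:: c; a; 0; 1] j).

Lemma sub_mkB (u : 'rV[F]_4) (a b c : F) : (u <= mkB a b c)%MS =
  (co u 0 == co u 2 * a + co u 3 * c) && (co u 1 == co u 2 * b + co u 3 * a).
Proof.
apply/submxP/andP => [[D ->]|[/eqP h0 /eqP h1]].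
  rewrite /co !mxE !big_ord_recl !big_ord0 !mxE /= !inordK //=.
  by rewrite !mulr1 !mulr0 !addr0 !add0r !eqxx.
exists (\matrix_(i < 1, k < 2) nth 0 [:: co u 2; co u 3] k).
apply: row4P; rewrite /co !mxE !big_ord_recl !big_ord0 !mxE /= !inordK //=.
- by rewrite addr0 -h0.
- by rewrite addr0 -h1.
- by rewrite !mulr1 !mulr0 !addr0.
- by rewrite !mulr1 !mulr0 !addr0 add0r.
Qed.

(* The last two columns of mkB a b c form the identity matrix. *)
Lemma rank_mkB (a b c : F) : \rank (mkB a b c) = 2.
Proof.
apply/eqP; rewrite eqn_leq rank_leq_row /=.
pose P : 'M[F]_(4,2) := \matrix_(i < 4, j < 2) ((i : nat) == (j : nat) + 2)%N%:R.
have <- : \rank (mkB a b c *m P) = 2.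
  suff -> : mkB a b c *m P = 1%:M by rewrite mxrank1.
  apply/matrixP => i j; rewrite !mxE !big_ord_recl big_ord0 !mxE /=.
  case: i => [] [|[|i]] Hi //; case: j => [] [|[|j]] Hj //=;
    by rewrite ?mulr0 ?mulr1 ?mul0r ?mul1r ?addr0 ?add0r.
exact: mxrankM_maxl.
Qed.

Definition mkL (a b c : F) : 'M[F]_4 := <<mkB a b c>>%MS.

Lemma mkL_L1 (a b c : F) : mkL a b c \in L1 F.
Proof.
rewrite !inE /is_line /mkL genmx_id eqxx /= genmxE rank_mkB eqxx /=.
apply/andP; split.
  apply/forallP => u; apply/forallP => v; apply/implyP => /andP [].
  rewrite !genmxE !sub_mkB => /andP [/eqP u0 /eqP u1] /andP [/eqP v0 /eqP v1].
  by rewrite /sform -!/(co _ _) u0 u1 v0 v1; apply/eqP; ring.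
apply/forallP => x; apply/negP => /andP []; have [u u_neq0 Eu] := point_spanned x.
rewrite /incid !Eu /mkL genmxE sub_mkB sub_ell0P => /andP [/eqP u0 /eqP u1] /andP [/eqP u2 /eqP u3].
move: u0 u1; rewrite u2 u3 !mul0r !addr0 => u0 u1.
by case/eqP: u_neq0; apply: row4P; rewrite ?u0 ?u1 ?u2 ?u3 /co mxE.
Qed.

Lemma inC_add (S : {set 'M[F]_4}) (f g : F2P F) : inC S f -> inC S g -> inC S (f + g).
Proof.
case=> c ->; case=> c' ->; exists (fun l => c l + c' l); rewrite -big_split.
by apply: eq_bigr => l _; apply/ffunP => x; rewrite !ffunE mulrDl.
Qed.

Lemma inC_sum (I : finType) (S : {set 'M[F]_4}) (f : I -> 'M[F]_4) :
  (forall i, f i \in S) -> inC S (\sum_i chi (f i)).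
Proof.
move=> fS; exists (fun l => \sum_i (l == f i)%:R); apply/ffunP => x.
rewrite sum_ffunE [RHS]sum_ffunE; under [RHS]eq_bigr do rewrite ffunE /= mulr_suml.
rewrite [RHS]exchange_big /=; apply: eq_bigr => i _.
rewrite [RHS](bigD1 (f i)) //= eqxx mul1r big1 ?addr0 // => l /andP [_ /negbTE ->].
by rewrite mul0r.
Qed.

Lemma exists_dual_coords (pv : 'rV[F]_4) : pv != 0 -> co pv 2 = 0 -> co pv 3 = 0 ->
  exists g0 g1 : F, g0 * co pv 0 + g1 * co pv 1 = 1.
Proof.
move=> pv_neq0 pv2 pv3; case: (eqVneq (co pv 0) 0) => [d0|d0_neq0].
  have d1_neq0 : co pv 1 != 0.
    apply: contraNneq pv_neq0 => d1; apply/eqP; apply: row4P;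
    by rewrite ?d0 ?d1 ?pv2 ?pv3 /co mxE.
  by exists 0, (co pv 1)^-1; rewrite mul0r add0r mulVf.
by exists (co pv 0)^-1, 0; rewrite mulVf // mul0r addr0.
Qed.

(* From now on F has characteristic 2, as the field with 2^t elements does. *)
Hypothesis char2 : forall x : F, x *+ 2 = 0.

Lemma sform_char2 (u v : 'rV[F]_4) : sform u v =
  co u 0 * co v 3 + co u 3 * co v 0 + co u 1 * co v 2 + co u 2 * co v 1.
Proof. by rewrite /sform !(oppr_char2 char2). Qed.

Section PencilThroughPoint.
Variables (pv : 'rV[F]_4) (g0 g1 : F).
Hypotheses (pv2 : co pv 2 = 0) (pv3 : co pv 3 = 0) (gd : g0 * co pv 0 + g1 * co pv 1 = 1).
Local Notation d0 := (co pv 0).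
Local Notation d1 := (co pv 1).

(* Coordinate of (u2, u3) along (d0, d1), with respect to the dual pair g. *)
Definition rho (u : 'rV[F]_4) : F := co u 2 * g0 + co u 3 * g1.
(* kappa u = sform u pv in characteristic 2; u is orthogonal to p iff kappa u = 0. *)
Definition kappa (u : 'rV[F]_4) : F := co u 2 * d1 + co u 3 * d0.
(* wt u = sform u (0, 0, d0, d1). *)
Definition wt (u : 'rV[F]_4) : F := co u 0 * d1 + co u 1 * d0.

Lemma kappa0_coords (u : 'rV[F]_4) : kappa u = 0 ->
  co u 2 = rho u * d0 /\ co u 3 = rho u * d1.
Proof.
by move/eqP; rewrite (addr_eq0_char2 char2) => /eqP /(parallel_coords gd).
Qed.

Lemma sform_pv (u : 'rV[F]_4) : sform u pv = kappa u.
Proof. by rewrite sform_char2 pv2 pv3 /kappa; ring. Qed.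

Lemma sform_perp (u v : 'rV[F]_4) : kappa u = 0 -> kappa v = 0 ->
  sform u v = rho v * wt u + rho u * wt v.
Proof.
case/kappa0_coords => u2 u3 /kappa0_coords [v2 v3].
by rewrite sform_char2 u2 u3 v2 v3 /wt; ring.
Qed.

Lemma line_char (l : 'M[F]_4) : is_line l -> l != ell0 F -> (pv <= l)%MS ->
  exists th : F, forall u : 'rV[F]_4,
    (u <= l)%MS = (kappa u == 0) && (wt u == th * rho u).
Proof.
move=> Hl Hl0 pvl; have [z zl z_off] := line_off_ell0 Hl Hl0.
have kz : kappa z = 0 by rewrite -sform_pv (line_iso Hl zl pvl).
have [z2 z3] := kappa0_coords kz.
have mu_neq0 : rho z != 0.
  by apply: contraFneq z_off => mu0; rewrite sub_ell0P z2 z3 mu0 !mul0r eqxx.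
exists (wt z / rho z) => u; apply/idP/andP => [ul|[/eqP ku /eqP wu]].
  have ku : kappa u = 0 by rewrite -sform_pv (line_iso Hl ul pvl).
  have /eqP := line_iso Hl ul zl; rewrite sform_perp // (addr_eq0_char2 char2) => /eqP wzu.
  split; first by rewrite ku.
  by apply/eqP/(mulfI mu_neq0); rewrite wzu mulrA mulrCA divff // mulr1 mulrC.
set r := rho u / rho z; set x0 := co u 0 - r * co z 0; set x1 := co u 1 - r * co z 1.
have x01 : x0 * d1 = x1 * d0.
  apply/eqP; rewrite -(addr_eq0_char2 char2); apply/eqP.
  transitivity (wt u - r * wt z); first by rewrite /x0 /x1 /wt; ring.
  by rewrite wu /r; ring.
have [e0 e1] := parallel_coords gd x01.
have [u2 u3] := kappa0_coords ku.
have -> : u = (x0 * g0 + x1 * g1) *: pv + r *: z.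
  apply: row4P; rewrite !co_lin.
  - by rewrite -e0 subrK.
  - by rewrite -e1 subrK.
  - by rewrite pv2 z2 u2 mulr0 add0r mulrA divfK.
  - by rewrite pv3 z3 u3 mulr0 add0r mulrA divfK.
by rewrite addmx_sub // scalemx_sub.
Qed.

Section SpreadFamily.
Variable eta : F.

Definition fam (t s : F) : 'M[F]_4 :=
  mkL (t * g0 * g1 + s + s ^+ 2 / eta * d0 * d1)
      (t * g0 ^+ 2 + s ^+ 2 / eta * d1 ^+ 2)
      (t * g1 ^+ 2 + s ^+ 2 / eta * d0 ^+ 2).

Lemma sub_fam (u : 'rV[F]_4) (t s : F) : (u <= fam t s)%MS =
  (co u 0 == t * g1 * rho u + s * co u 2 + s ^+ 2 / eta * d0 * kappa u) &&
  (co u 1 == t * g0 * rho u + s * co u 3 + s ^+ 2 / eta * d1 * kappa u).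
Proof. by rewrite /fam /mkL genmxE sub_mkB /rho /kappa; congr (_ && _); congr (_ == _); ring. Qed.

Definition fam_count (t : F) (u : 'rV[F]_4) : 'F_2 := \sum_(s : F) (u <= fam t s)%MS%:R.

Lemma fam_count_ell0 (t : F) (u : 'rV[F]_4) : u != 0 -> kappa u = 0 -> rho u = 0 ->
  fam_count t u = 0.
Proof.
move=> u_neq0 ku ru; have [u2 u3] := kappa0_coords ku.
apply: big1 => s _; rewrite sub_fam ku u2 u3 ru !(mulr0, mul0r, addr0).
case: eqP => [u0|] //=; case: eqP => [u1|] //; case/eqP: u_neq0.
by apply: row4P; rewrite ?u0 ?u1 ?u2 ?u3 ?ru ?mul0r /co mxE.
Qed.

Lemma fam_count_perp (t : F) (u : 'rV[F]_4) : kappa u = 0 -> rho u != 0 ->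
  fam_count t u = (wt u == t * rho u)%:R.
Proof.
move=> ku ru; have [u2 u3] := kappa0_coords ku.
pose x0 := co u 0 - t * g1 * rho u; pose x1 := co u 1 - t * g0 * rho u.
have memE s : (u <= fam t s)%MS = (s == (x0 * g0 + x1 * g1) / rho u) && (wt u == t * rho u).
  rewrite sub_fam ku u2 u3 !mulr0 !addr0 ![_ + s * _]addrC -!subr_eq !mulrA.
  rewrite (parallelE gd) andbC; congr (_ && _).
    apply/eqP/eqP => [<-|->]; [by rewrite mulfK | by rewrite divfK].
  rewrite -(addr_eq0_char2 char2) -[in RHS]subr_eq0; congr (_ == 0).
  transitivity (wt u - t * rho u * (g0 * d0 + g1 * d1)).
    by rewrite /x0 /x1 /wt; ring.
  by rewrite gd mulr1.
rewrite /fam_count (eq_bigr _ (fun s _ => congr1 (fun b : bool => b%:R) (memE s))).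
by rewrite (bigD1 ((x0 * g0 + x1 * g1) / rho u)) //= eqxx big1 ?addr0 // => s /negbTE ->.
Qed.

Lemma fam_count_shift (t : F) (u : 'rV[F]_4) : eta != 0 -> kappa u != 0 ->
  fam_count (t + eta) u = fam_count t u.
Proof.
move=> eta_neq0 ku.
have E0 : g1 * kappa u + co u 2 + rho u * d0 = 0.
  transitivity ((co u 2 + g1 * co u 3 * d0) *+ 2 + co u 2 * (g0 * d0 + g1 * d1 - 1)).
    by rewrite /kappa /rho; ring.
  by rewrite char2 gd subrr mulr0 add0r.
have E1 : g0 * kappa u + co u 3 + rho u * d1 = 0.
  transitivity ((co u 3 + g0 * co u 2 * d1) *+ 2 + co u 3 * (g0 * d0 + g1 * d1 - 1)).
    by rewrite /kappa /rho; ring.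
  by rewrite char2 gd subrr mulr0 add0r.
rewrite /fam_count (reindex_inj (addIr (eta * rho u / kappa u))) /=.
apply: eq_bigr => s _; rewrite !sub_fam.
by rewrite (shift_identity char2 _ _ ku eta_neq0 E0) (shift_identity char2 _ _ ku eta_neq0 E1).
Qed.

Lemma pencil_pair_count (th : F) (u : 'rV[F]_4) : eta != 0 -> u != 0 ->
  ((kappa u == 0) && (wt u == th * rho u))%:R
    + ((kappa u == 0) && (wt u == (th + eta) * rho u))%:R
  = fam_count th u + fam_count (th + eta) u.
Proof.
move=> eta_neq0 u_neq0; have [ku|ku] := eqVneq (kappa u) 0.
  have [ru|ru] := eqVneq (rho u) 0.
    by rewrite !fam_count_ell0 // ru !mulr0 addr0 addxx_F2.
  by rewrite !fam_count_perp.
by rewrite fam_count_shift // addr0 addxx_F2.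
Qed.

End SpreadFamily.

Lemma pencil_pair_inC (l l' : 'M[F]_4) (th eta : F) : eta != 0 ->
  (forall u, (u <= l)%MS = (kappa u == 0) && (wt u == th * rho u)) ->
  (forall u, (u <= l')%MS = (kappa u == 0) && (wt u == (th + eta) * rho u)) ->
  inC (L1 F) (chi l + chi l').
Proof.
move=> eta_neq0 Hl Hl'.
have -> : chi l + chi l' =
    \sum_s chi (fam eta th s) + \sum_s chi (fam eta (th + eta) s).
  apply/ffunP => x; have [u u_neq0 Eu] := point_spanned x.
  rewrite !ffunE !sum_ffunE; under eq_bigr => s _ do rewrite ffunE /incid Eu.
  under [X in _ = _ + X]eq_bigr => s _ do rewrite ffunE /incid Eu.
  by rewrite /incid !Eu Hl Hl' pencil_pair_count.
by apply: inC_add; apply: inC_sum => s; apply: mkL_L1.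
Qed.

End PencilThroughPoint.

End SymplecticGeometry.

Theorem lemma5 (t : nat) (F : finFieldType) (hq : #|F| = (2 ^ t)%N)
  (p : point F) (l l' : 'M[F]_4) :
  is_line l -> is_line l' -> l != l' -> l != ell0 F -> l' != ell0 F ->
  incid p (ell0 F) -> incid p l -> incid p l' ->
  inC (L1 F) (chi l + chi l').
Proof.
move=> Hl Hl' ll' Hl0 Hl0' Hp0 Hpl Hpl'.
have char2 (x : F) : x *+ 2 = 0.
  by rewrite -mulr_natl (pcharf0 (card_finPcharP hq (isT : prime 2))) mul0r.
have [pv pv_neq0 Ep] := point_spanned p.
move: Hp0 Hpl Hpl'; rewrite /incid !Ep sub_ell0P => /andP [/eqP pv2 /eqP pv3] Hpl Hpl'.
have [g0 [g1 gd]] := exists_dual_coords pv_neq0 pv2 pv3.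
have [th Hth] := line_char char2 pv2 pv3 gd Hl Hl0 Hpl.
have [th' Hth'] := line_char char2 pv2 pv3 gd Hl' Hl0' Hpl'.
have eta_neq0 : th' - th != 0.
  rewrite subr_eq0; apply: contraNneq ll' => th_eq.
  by apply/eqP; apply: line_eq => // u; rewrite Hth Hth' th_eq.
apply: (pencil_pair_inC char2 gd eta_neq0 Hth) => u.
by rewrite addrC subrK Hth'.
Qed.
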